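(* Let $K$ be a field. For every positive integer $N$ there exist an integer $d\ge 2$ and integers $t_1<t_2<\cdots<t_{2d+1}$ such that the toric ideal $I_A\subset K[x_1,\ldots,x_{2d+1}]$ of the cyclic configuration $A=\{{\bf a}_{t_1},\ldots,{\bf a}_{t_{2d+1}}\}$ (which has height $2$) satisfies $\mathrm{Split}(I_A)\ge N$ and $\mathrm{Split}_{\mathrm{rad}}(I_A)\ge N$.
   Context: For an integer $t$ and an integer $d\ge 2$, ${\bf a}_t=(1,t,t^2,\ldots,t^{2d-2})^T\in\mathbb{Z}^{2d-1}$. The cyclic configuration $A$ is the set of columns of the $(2d-1)\times(2d+1)$ Vandermonde matrix $({\bf a}_{t_1}\ {\bf a}_{t_2}\ \cdots\ {\bf a}_{t_{2d+1}})$ with $t_1<\cdots<t_{2d+1}$ integers. The toric ideal $I_A$ is the kernel of $K[x_1,\ldots,x_{2d+1}]\to K[s_1^{\pm1},\ldots,s_{2d-1}^{\pm1}]$, $x_i\mapsto{\bf s}^{{\bf a}_{t_i}}$. $\mathrm{Split}(I_A)$ is the smallest integer $s$ such that there exist toric ideals $I_{A_1},\ldots,I_{A_s}\subset K[x_1,\ldots,x_{2d+1}]$ with $I_A=I_{A_1}+\cdots+I_{A_s}$ and $I_{A_i}\ne I_A$ for all $i$; $\mathrm{Split}_{\mathrm{rad}}(I_A)$ is the smallest integer $r$ such that there exist toric ideals $I_{A_1},\ldots,I_{A_r}$ with $I_A=\mathrm{rad}(I_{A_1}+\cdots+I_{A_r})$ and $I_{A_i}\ne I_A$ for all $i$. 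*)

From HB Require Import structures.
From mathcomp Require Import all_boot all_order all_algebra.
From mathcomp Require Import mpoly.
Set Implicit Arguments. Unset Strict Implicit. Unset Printing Implicit Defensive.
Import Order.TTheory GRing.Theory Num.Theory.
Local Open Scope ring_scope.

Definition mexp_col (n : nat) (u : 'X_{1..n}) : 'cV[int]_n :=
  \col_(i < n) ((u i)%:Z).

(* Toric ideal I_A in K[x_1,...,x_n] of a configuration A (columns a_1..a_n
   in Z^m): the kernel of x_i |-> s^{a_i}.  The image of f = sum_u c_u x^u is
   sum_u c_u s^{A u}, which is zero iff for every b in Z^m the coefficients
   c_u with A u = b sum to zero. *)
Definition toric_ideal (K : fieldType) (m n : nat) (A : 'M[int]_(m, n))
  (f : {mpoly K[n]}) : Prop :=
  forall b : 'cV[int]_m,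
    \sum_(u <- msupp f | A *m mexp_col u == b) f@_u = 0.

Definition ideal_sum (K : fieldType) (n s : nat)
  (I : 'I_s -> {mpoly K[n]} -> Prop) (f : {mpoly K[n]}) : Prop :=
  exists g : 'I_s -> {mpoly K[n]}, (forall i, I i (g i)) /\ f = \sum_(i < s) g i.

Definition ideal_rad (K : fieldType) (n : nat) (J : {mpoly K[n]} -> Prop)
  (f : {mpoly K[n]}) : Prop :=
  exists k : nat, J (f ^+ k.+1).

Definition ideal_eq (K : fieldType) (n : nat) (I J : {mpoly K[n]} -> Prop) : Prop :=
  forall f, I f <-> J f.

Definition is_splitting (K : fieldType) (m n s : nat) (A : 'M[int]_(m, n))
  (ms : 'I_s -> nat) (As : forall i : 'I_s, 'M[int]_(ms i, n)) : Prop :=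
  ideal_eq (@toric_ideal K _ _ A) (ideal_sum (fun i => @toric_ideal K _ _ (As i))) /\
  forall i, ~ ideal_eq (@toric_ideal K _ _ (As i)) (@toric_ideal K _ _ A).

Definition is_rad_splitting (K : fieldType) (m n s : nat) (A : 'M[int]_(m, n))
  (ms : 'I_s -> nat) (As : forall i : 'I_s, 'M[int]_(ms i, n)) : Prop :=
  ideal_eq (@toric_ideal K _ _ A)
           (ideal_rad (ideal_sum (fun i => @toric_ideal K _ _ (As i)))) /\
  forall i, ~ ideal_eq (@toric_ideal K _ _ (As i)) (@toric_ideal K _ _ A).

Definition split_ge (K : fieldType) (m n : nat) (A : 'M[int]_(m, n)) (N : nat) : Prop :=
  forall s : nat, (s < N)%N ->
    ~ exists (ms : 'I_s -> nat) (As : forall i : 'I_s, 'M[int]_(ms i, n)),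
        @is_splitting K _ _ _ A ms As.

Definition split_rad_ge (K : fieldType) (m n : nat) (A : 'M[int]_(m, n)) (N : nat) : Prop :=
  forall s : nat, (s < N)%N ->
    ~ exists (ms : 'I_s -> nat) (As : forall i : 'I_s, 'M[int]_(ms i, n)),
        @is_rad_splitting K _ _ _ A ms As.

Definition cyclic_config (d : nat) (t : 'I_(d.*2.+1) -> int) :
  'M[int]_(d.*2.-1, d.*2.+1) :=
  \matrix_(i < d.*2.-1, j < d.*2.+1) (t j) ^+ i.

(* Take t_j = j for 0 <= j <= 2d and write n = 2d.  The integer kernel of the
   cyclic configuration A consists of the vectors v with
   n v_j = (-1)^j C(n, j) (a + b j) for some integers a, b (finite differences
   of order n kill polynomials of degree < n), and a toric ideal I_B only
   depends on the lattice ker B.  Suppose I_A = rad(I_{A_1} + ... + I_{A_s})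
   with I_{A_i} <> I_A (a splitting is a special case).  Then ker A_i is a
   sublattice of ker A that cannot contain two independent vectors of it.
   For odd k < n, ker A contains a vector w positive at k and k+1, and the
   binomial x^{w+} - x^{w-} of I_A equals -1 at the point z with z_k = z_{k+1}
   = 0 and all other coordinates 1.  Hence some element of some I_{A_i} does
   not vanish at z, and two of its monomials in the same A_i-fibre, one
   avoiding x_k and x_{k+1} and one not, give v in ker A_i with v_k, v_{k+1}
   >= 0 not both zero: the line a + b x of v increases and vanishes in
   [k, k+1].  Vectors obtained in this way for different k are independent,
   so k |-> i is injective on the d odd values of k, and s >= d. *)

From HB Require Import structures.
From mathcomp Require Import all_boot all_order all_algebra.
From mathcomp Require Import mpoly.
From mathcomp Require Import ring zify.
Set Implicit Arguments. Unset Strict Implicit. Unset Printing Implicit Defensive.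
Import Order.TTheory GRing.Theory Num.Theory.
Local Open Scope ring_scope.

Lemma sum_bin_pascal (R : nmodType) (n : nat) (a : nat -> R) :
  \sum_(j < n.+2) a j *+ 'C(n.+1, j) = \sum_(j < n.+1) (a j + a j.+1) *+ 'C(n, j).
Proof.
rewrite big_ord_recl bin0.
under eq_bigr do rewrite binS mulrnDr.
under [RHS]eq_bigr do rewrite mulrnDl.
rewrite !big_split /= addrA; congr (_ + _).
by rewrite big_ord_recr [RHS]big_ord_recl /= bin_small // mulr0n addr0 bin0.
Qed.

Lemma sum_alt_bin_expr_eq0 (R : comPzRingType) (n m : nat) : (m < n)%N ->
  \sum_(j < n.+1) (-1) ^+ j * (j%:R : R) ^+ m *+ 'C(n, j) = 0.
Proof.
elim: n m => [//|n IHn] m ltmn.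
rewrite (sum_bin_pascal _ (fun j => (-1) ^+ j * (j%:R : R) ^+ m)).
have step j : (-1) ^+ j * (j%:R : R) ^+ m + (-1) ^+ j.+1 * (j.+1%:R) ^+ m
    = - \sum_(i < m) (-1) ^+ j * (j%:R) ^+ i *+ 'C(m, i).
  rewrite -[j.+1%:R]natr1 exprD1n big_ord_recr /= binn mulr1n exprS.
  rewrite mulN1r mulNr mulrDr opprD addrCA subrr addr0 mulr_sumr.
  by congr (- _); apply: eq_bigr => i _; rewrite mulrnAr.
under eq_bigr do rewrite step mulNrn -sumrMnl.
rewrite sumrN (exchange_big_dep xpredT) //= big1 ?oppr0 // => i _.
under eq_bigr do rewrite mulrnAC.
by rewrite sumrMnl IHn ?mul0rn // (leq_trans (ltn_ord i)).
Qed.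

Definition nat_vander (r p : nat) : 'M[int]_(r, p) := \matrix_(i < r, j < p) j%:Z ^+ i.

Lemma nat_vander_kerP r p (x : 'cV[int]_p) :
  nat_vander r p *m x = 0 <-> forall i, (i < r)%N -> \sum_(j < p) j%:Z ^+ i * x j 0 = 0.
Proof.
split=> [Ax0 i ltir | Ax0].
  have := congr1 (fun y : 'cV_r => y (Ordinal ltir) 0) Ax0; rewrite !mxE.
  by under eq_bigr do rewrite mxE.
apply/matrixP => i j; rewrite ord1 !mxE -[RHS](Ax0 i (ltn_ord i)).
by under eq_bigr do rewrite mxE.
Qed.

Lemma nat_vander_ker_horner r p (x : 'cV[int]_p) (q : {poly int}) :
  nat_vander r p *m x = 0 -> (size q <= r)%N -> \sum_(j < p) x j 0 * q.[j%:Z] = 0.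
Proof.
move=> /nat_vander_kerP Ax0 szq.
under eq_bigr do rewrite horner_coef mulr_sumr.
rewrite exchange_big /= big1 // => i _.
under eq_bigr => j _ do rewrite mulrCA [x j 0 * _]mulrC.
by rewrite -mulr_sumr Ax0 ?mulr0 // (leq_trans (ltn_ord i)).
Qed.

Lemma nat_vander_ker_eq0 r p (x : 'cV[int]_p) :
  nat_vander r p *m x = 0 -> (forall j : 'I_p, (r <= j)%N -> x j 0 = 0) -> x = 0.
Proof.
move=> Ax0 x_high; apply/matrixP => k i0; rewrite ord1 mxE.
have [/x_high //|ltkr] := leqP r k.
pose nodes := rem (k : nat) (iota 0 r).
have mem_nodes l : (l \in nodes) = (l != k) && (l < r)%N.
  by rewrite mem_rem_uniq ?iota_uniq // inE mem_iota.
pose q : {poly int} := \prod_(l <- nodes) ('X - l%:Z%:P).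
have qE (j : nat) : q.[j%:Z] = \prod_(l <- nodes) (j%:Z - l%:Z).
  by rewrite horner_prod; apply: eq_bigr => l _; rewrite hornerXsubC.
have q_eq0 (j : nat) : (q.[j%:Z] == 0) = (j != k) && (j < r)%N.
  rewrite qE prodf_seq_eq0 -mem_nodes; apply/hasP/idP => [[l ln]|jn].
    by rewrite subr_eq0 => /eqP [->].
  by exists j; rewrite ?subrr.
have szq : (size q <= r)%N.
  by rewrite size_prod_XsubC size_rem ?mem_iota // size_iota; case: (r) ltkr.
have := nat_vander_ker_horner Ax0 szq.
rewrite (bigD1 k) //= big1 ?addr0 => [/eqP|j jk].
  by rewrite mulf_eq0 q_eq0 eqxx => /orP [/eqP|].
have [/x_high -> | ltjr] := leqP r j; first by rewrite mul0r.
by apply/eqP; rewrite mulf_eq0 q_eq0 ltjr andbT [_ != _]jk orbT.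
Qed.

Definition alt_binom (n j : nat) : int := (-1) ^+ j * 'C(n, j)%:R.

Definition alt_binom_line (n : nat) (a b : int) : 'cV[int]_n.+1 :=
  \col_j (alt_binom n j * (a + b * j%:Z)).

Lemma nat_vander_alt_binom_line n a b : nat_vander n.-1 n.+1 *m alt_binom_line n a b = 0.
Proof.
apply/nat_vander_kerP => i ltin.
have altE m : (m < n)%N -> \sum_(j < n.+1) j%:Z ^+ m * alt_binom n j = 0.
  move=> ltmn; rewrite -[RHS](sum_alt_bin_expr_eq0 _ ltmn).
  by apply: eq_bigr => j _; rewrite /alt_binom -[RHS]mulr_natr !natz; ring.
have -> : \sum_(j < n.+1) j%:Z ^+ i * alt_binom_line n a b j 0
    = a * \sum_(j < n.+1) j%:Z ^+ i * alt_binom n j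
      + b * \sum_(j < n.+1) j%:Z ^+ i.+1 * alt_binom n j.
  rewrite /alt_binom_line !mulr_sumr -big_split /=.
  by apply: eq_bigr => j _; rewrite mxE exprSr; ring.
by rewrite !altE ?mulr0 ?addr0 //; lia.
Qed.

Lemma nat_vander_ker_line n (x : 'cV[int]_n.+1) : (0 < n)%N ->
  nat_vander n.-1 n.+1 *m x = 0 -> exists a b, n%:Z *: x = alt_binom_line n a b.
Proof.
case: n x => [//|n] x _ /= Ax0.
set s : int := (-1) ^+ n.+1.
have s2 : s * s = 1 by rewrite -exprD -signr_odd addnn odd_double.
have Etop : alt_binom n.+1 n.+1 = s by rewrite /alt_binom binn mulr1.
have Esub : alt_binom n.+1 n = - s * n.+1%:Z.
  by rewrite /alt_binom binSn /s exprS natz; ring.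
clearbody s.
pose x1 := x (inord n) 0; pose x2 := x ord_max 0.
pose b := s * (n.+1%:Z * x2 + x1); pose a := - s * x1 - n%:Z * b.
exists a, b.
apply/eqP; rewrite -subr_eq0; apply/eqP; apply: (@nat_vander_ker_eq0 n).
  by rewrite mulmxBr -scalemxAr Ax0 scaler0 (nat_vander_alt_binom_line n.+1) subrr.
move=> j lenj; rewrite !mxE.
have [jn | jn] : (j : nat) = n \/ (j : nat) = n.+1 by have := ltn_ord j; lia.
  have -> : j = inord n by apply: val_inj; rewrite /= inordK.
  rewrite inordK // Esub.
  transitivity (n.+1%:Z * x1 * (1 - s * s)); last by rewrite s2 subrr mulr0.
  by rewrite /a /b /x1; ring.
have -> : j = ord_max by apply: val_inj.
rewrite Etop /=.
transitivity (n.+1%:Z * x2 * (1 - s * s)); last by rewrite s2 subrr mulr0.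
by rewrite /a /b /x2; ring.
Qed.

Lemma alt_binom_line_cramer n (a b a' b' ax bx : int) :
  (a * b' - a' * b) *: alt_binom_line n ax bx =
  (ax * b' - a' * bx) *: alt_binom_line n a b + (a * bx - ax * b) *: alt_binom_line n a' b'.
Proof. by apply/matrixP => j i0; rewrite !mxE; ring. Qed.

Definition increasing_root_in (k a b : int) : Prop :=
  [/\ 0 < b, a + b * k <= 0 & 0 <= a + b * (k + 1)].

Lemma increasing_root_in_of_signs (k a b : int) :
  a + b * k <= 0 -> 0 <= a + b * (k + 1) -> (a + b * k != 0) || (a + b * (k + 1) != 0) ->
  increasing_root_in k a b.
Proof.
rewrite /increasing_root_in mulrDr mulr1; move: (b * k) => c.
by move=> le0 ge0 /orP neq0; split=> //; case: neq0; lia.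
Qed.

Lemma increasing_root_in_det_gt0 (k k' a b a' b' : int) :
  increasing_root_in k a b -> increasing_root_in k' a' b' -> k + 1 < k' -> 0 < a * b' - a' * b.
Proof.
move=> [b_gt0 _ ge0] [b'_gt0 le0' _] far.
have h1 : 0 <= (a + b * (k + 1)) * b' by rewrite mulr_ge0 // ltW.
have h2 : (a' + b' * k') * b <= 0 by rewrite mulr_le0_ge0 // ltW.
have h3 : 0 < b * b' * (k' - k - 1) by rewrite !mulr_gt0 //; lia.
lia.
Qed.

Lemma big_saturated_eq0 (I T : eqType) (V : nmodType) (key : I -> T) (r : seq I)
    (F : I -> V) (P : pred I) :
  (forall b, \sum_(i <- r | key i == b) F i = 0) ->
  {in r &, forall i j, key i = key j -> P i = P j} ->
  \sum_(i <- r | P i) F i = 0.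
Proof.
move=> fibre0 Psat.
pose keys := undup [seq key i | i <- r & P i].
have keysP i : i \in r -> (key i \in keys) = P i.
  move=> ri; rewrite mem_undup; apply/mapP/idP => [[j] | Pi].
    by rewrite mem_filter => /andP [Pj rj] /(Psat _ _ ri rj) ->.
  by exists i; rewrite ?mem_filter ?Pi.
suff -> : \sum_(i <- r | P i) F i = \sum_(b <- keys) \sum_(i <- r | key i == b) F i.
  by rewrite big1.
rewrite (exchange_big_dep xpredT) //= big_mkcond [LHS]big_seq [RHS]big_seq.
apply: eq_bigr => i ri; rewrite big_const_seq -keysP //.
have -> : count (fun b => key i == b) keys = (key i \in keys).
  by rewrite -count_uniq_mem ?undup_uniq //; apply: eq_count => b; rewrite eq_sym.
by case: (key i \in keys); rewrite /= ?addr0.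
Qed.

Section ToricIdeal.
Variables (K : fieldType) (n : nat).
Implicit Types (p : {mpoly K[n]}) (u : 'X_{1..n}).

Lemma big_msupp_sub p (r : seq 'X_{1..n}) (P : pred 'X_{1..n}) :
  uniq r -> {subset msupp p <= r} ->
  \sum_(u <- msupp p | P u) p@_u = \sum_(u <- r | P u) p@_u.
Proof.
move=> r_uniq supp_r.
rewrite [RHS](bigID (mem (msupp p))) /= [X in _ + X]big1 ?addr0; last first.
  by move=> u /andP [_]; rewrite -mcoeff_eq0 => /eqP.
rewrite -big_filter -[RHS]big_filter; apply/perm_big/uniq_perm.
- by rewrite filter_uniq ?msupp_uniq.
- by rewrite filter_uniq.
move=> u; rewrite !mem_filter -andbA.
by case: (boolP (u \in msupp p)) => [/supp_r ->|]; rewrite ?andbF.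
Qed.

Lemma toric_ideal0 m (B : 'M[int]_(m, n)) : toric_ideal B (0 : {mpoly K[n]}).
Proof. by move=> b; rewrite msupp0 big_nil. Qed.

Lemma toric_binomialP m (B : 'M[int]_(m, n)) u u' :
  toric_ideal B ('X_[u] - 'X_[u'] : {mpoly K[n]}) <-> B *m mexp_col u = B *m mexp_col u'.
Proof.
have [<-|neq_uu'] := eqVneq u u'; first by rewrite subrr; split=> // _; apply: toric_ideal0.
have fibreE b : \sum_(v <- msupp ('X_[u] - 'X_[u'] : {mpoly K[n]}) | B *m mexp_col v == b)
     ('X_[u] - 'X_[u'] : {mpoly K[n]})@_v
   = (B *m mexp_col u == b)%:R - (B *m mexp_col u' == b)%:R.
  rewrite (@big_msupp_sub _ [:: u; u']) /=; first last.
  - move=> v; rewrite mcoeff_msupp !inE mcoeffB !mcoeffX [u == v]eq_sym [u' == v]eq_sym.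
    by case: (v == u); case: (v == u'); rewrite //= subrr eqxx.
  - by rewrite inE neq_uu'.
  rewrite !big_cons big_nil !mcoeffB !mcoeffX !eqxx [u' == u]eq_sym (negbTE neq_uu').
  by case: (_ == b); case: (_ == b); rewrite /= ?subr0 ?sub0r ?addr0 ?add0r.
split=> [Bu | Bu b]; last by rewrite fibreE Bu subrr.
apply/eqP; move: (Bu (B *m mexp_col u)); rewrite fibreE eqxx eq_sym.
by case: eqP => // _ /eqP; rewrite subr0 oner_eq0.
Qed.

Definition mnm_pos (w : 'cV[int]_n) : 'X_{1..n} :=
  [multinom if (0 <= w j 0)%R then absz (w j 0)%R else 0%N | j < n].

Lemma mexp_col_pos_neg (w : 'cV[int]_n) : mexp_col (mnm_pos w) - mexp_col (mnm_pos (- w)) = w.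
Proof.
apply/matrixP => j i0; rewrite ord1 !mxE !mnmE mxE oppr_ge0 /=.
case: (ltgtP (w j 0) 0) => [w_lt0 | w_gt0 | ->] //.
  by rewrite sub0r abszN abszE ltr0_norm ?opprK.
by rewrite subr0 abszE gtr0_norm.
Qed.

Lemma mulmx_mexp_colP m (B : 'M[int]_(m, n)) u u' :
  B *m mexp_col u = B *m mexp_col u' <-> B *m (mexp_col u - mexp_col u') = 0.
Proof. by rewrite mulmxBr; split=> [->|/eqP]; rewrite ?subrr // subr_eq0 => /eqP. Qed.

Lemma toric_ideal_sub_ker m1 m2 (B1 : 'M[int]_(m1, n)) (B2 : 'M[int]_(m2, n)) :
  (forall p, toric_ideal B1 p -> toric_ideal B2 p) ->
  forall v : 'cV[int]_n, B1 *m v = 0 -> B2 *m v = 0.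
Proof.
move=> sub12 v; rewrite -[v]mexp_col_pos_neg -!mulmx_mexp_colP.
by move=> /toric_binomialP /sub12 /toric_binomialP.
Qed.

Lemma toric_ideal_eq_ker m1 m2 (B1 : 'M[int]_(m1, n)) (B2 : 'M[int]_(m2, n)) :
  (forall v : 'cV[int]_n, B1 *m v = 0 <-> B2 *m v = 0) ->
  ideal_eq (@toric_ideal K _ _ B1) (@toric_ideal K _ _ B2).
Proof.
suff sub m m' (C : 'M[int]_(m, n)) (C' : 'M[int]_(m', n)) :
    (forall v : 'cV[int]_n, C *m v = 0 -> C' *m v = 0) ->
    (forall v : 'cV[int]_n, C' *m v = 0 -> C *m v = 0) ->
    forall p, toric_ideal C p -> toric_ideal C' p.
  by move=> ker12 p; split; apply: sub => v /ker12.
move=> ker12 ker21 p Cp b.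
have [/hasP [u0 _ /eqP <-] | /hasPn fibre0] :=
  boolP (has (fun u => C' *m mexp_col u == b) (msupp p)).
  rewrite -[RHS](Cp (C *m mexp_col u0)); apply: eq_bigl => u.
  apply/eqP/eqP => /mulmx_mexp_colP Cu; apply/mulmx_mexp_colP.
    exact: ker21.
  exact: ker12.
by rewrite big_seq_cond big1 // => u /andP [/fibre0 /negbTE ->].
Qed.

Lemma toric_ideal_fibre_split m (B : 'M[int]_(m, n)) p (P : pred 'X_{1..n}) :
  toric_ideal B p -> \sum_(u <- msupp p | P u) p@_u != 0 ->
  exists u u', [/\ u \in msupp p, u' \in msupp p,
    B *m mexp_col u = B *m mexp_col u', P u & ~~ P u'].
Proof.
move=> Bp /eqP sum_neq0.
pose split_at u u' := [&& B *m mexp_col u == B *m mexp_col u', P u & ~~ P u'].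
have [/hasP [u up /hasP [u' u'p /and3P [/eqP Buu' Pu nPu']]] | /hasPn no_split] :=
  boolP (has (fun u => has (split_at u) (msupp p)) (msupp p)); first by exists u, u'.
case: sum_neq0; apply: (big_saturated_eq0 Bp) => u u' up u'p Buu'.
have /hasPn no_uu' := no_split u up; have /hasPn no_u'u := no_split u' u'p.
move: (no_uu' u' u'p) (no_u'u u up); rewrite /split_at Buu' eqxx /=.
by case: (P u); case: (P u').
Qed.

Definition zero_on (S : {set 'I_n}) : 'I_n -> K := fun j => (j \notin S)%:R.

Lemma meval_zero_on (S : {set 'I_n}) p :
  p.@[zero_on S] = \sum_(u <- msupp p | [forall j in S, u j == 0%N]) p@_u.
Proof.
rewrite mevalE [RHS]big_mkcond /=; apply: eq_bigr => u _.
have [/forall_inP u_S | /forall_inPn [j jS uj]] := boolP [forall j in S, u j == 0%N].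
  rewrite big1 ?mulr1 // => j _; rewrite /zero_on.
  by case: (boolP (j \in S)) => [/u_S /eqP -> | _]; rewrite ?expr0 ?expr1n.
by rewrite (bigD1 j) //= /zero_on jS expr0n (negbTE uj) mul0r mulr0.
Qed.

Lemma mevalX_zero_on (S : {set 'I_n}) u :
  ('X_[u] : {mpoly K[n]}).@[zero_on S] = [forall j in S, u j == 0%N]%:R.
Proof. by rewrite meval_zero_on msuppX big_mkcond big_seq1 mcoeffX eqxx; case: ifP. Qed.

End ToricIdeal.

Arguments zero_on {K n} S.

Section CyclicCover.
Variables (K : fieldType) (d s : nat) (ms : 'I_s -> nat).
Variable As : forall i : 'I_s, 'M[int]_(ms i, d.*2.+1).
Local Notation n := d.*2.
Local Notation A := (nat_vander n.-1 n.+1).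
Hypothesis d_gt0 : (0 < d)%N.
Hypothesis As_sub : forall i (p : {mpoly K[n.+1]}), toric_ideal (As i) p -> toric_ideal A p.
Hypothesis A_sub_rad : forall p : {mpoly K[n.+1]},
  toric_ideal A p -> ideal_rad (ideal_sum (fun i => @toric_ideal K _ _ (As i))) p.
Hypothesis As_neq : forall i, ~ ideal_eq (@toric_ideal K _ _ (As i)) (@toric_ideal K _ _ A).

Lemma ker_As_sub i (v : 'cV[int]_n.+1) : As i *m v = 0 -> A *m v = 0.
Proof. exact: (toric_ideal_sub_ker (@As_sub i)). Qed.

Lemma ker_As_vector_on (S : {set 'I_n.+1}) (w : 'cV[int]_n.+1) :
  S != set0 -> A *m w = 0 -> (forall j, j \in S -> 0 < w j 0) ->
  exists i (v : 'cV[int]_n.+1), [/\ As i *m v = 0, forall j, j \in S -> 0 <= v j 0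
                                  & exists2 j, j \in S & v j 0 != 0].
Proof.
move=> /set0Pn [j0 j0S] Aw w_gt0.
pose g : {mpoly K[n.+1]} := 'X_[mnm_pos w] - 'X_[mnm_pos (- w)].
have Ag : toric_ideal A g by apply/toric_binomialP/mulmx_mexp_colP; rewrite mexp_col_pos_neg.
have g_at : g.@[zero_on S] = -1.
  rewrite mevalB !mevalX_zero_on.
  have /negbTE -> : ~~ [forall j in S, mnm_pos w j == 0%N].
    apply/forall_inPn; exists j0 => //.
    by rewrite mnmE (ltW (w_gt0 _ j0S)) absz_eq0 gt_eqF ?w_gt0.
  have /forall_inP -> // : {in S, forall j, mnm_pos (- w) j == 0%N}.
    by move=> j jS; rewrite mnmE mxE oppr_ge0 leNgt w_gt0.
  by rewrite sub0r.
have [e [h [Ash g_sum]]] := A_sub_rad Ag.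
have [i h_at] : exists i, (h i).@[zero_on S] != 0.
  apply/existsP; apply: contraT; rewrite negb_exists => /forallP /= h0.
  have := congr1 (meval (zero_on S)) g_sum; rewrite rmorphXn raddf_sum /= g_at big1.
    by move/eqP; rewrite signr_eq0.
  by move=> i _; apply/eqP; rewrite -[_ == _]negbK h0.
move: h_at; rewrite meval_zero_on => /(toric_ideal_fibre_split (Ash i)).
move=> [u [u' [_ _ Asu Pu nPu']]].
exists i, (mexp_col u' - mexp_col u); split.
- by apply/mulmx_mexp_colP; rewrite Asu.
- by move=> j jS; rewrite !mxE (eqP (forall_inP Pu j jS)) subr0.
have /forall_inPn [j jS u'j] := nPu'.
by exists j => //; rewrite !mxE (eqP (forall_inP Pu j jS)) subr0.
Qed.

Definition root_witness (i : 'I_s) (k : nat) : Prop :=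
  exists (v : 'cV[int]_n.+1) a b,
    [/\ As i *m v = 0, n%:Z *: v = alt_binom_line n a b & increasing_root_in k%:Z a b].

Lemma root_witness_far i k k' : (k.+1 < k')%N -> root_witness i k -> root_witness i k' -> False.
Proof.
move=> far [v [a [b [Asv v_line root]]]] [v' [a' [b' [Asv' v'_line root']]]].
have n_gt0 : (0 < n)%N by rewrite double_gt0.
have det_gt0 : 0 < a * b' - a' * b.
  by apply: increasing_root_in_det_gt0 root root' _; rewrite -PoszD ltz_nat addn1.
apply: (@As_neq i); apply: toric_ideal_eq_ker => x; split; first exact: ker_As_sub.
move=> /(nat_vander_ker_line n_gt0) [ax [bx x_line]].
have : As i *m ((a * b' - a' * b) *: (n%:Z *: x)) = 0.
  rewrite x_line alt_binom_line_cramer -v_line -v'_line mulmxDr -!scalemxAr.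
  by rewrite Asv Asv' !scaler0 addr0.
rewrite -!scalemxAr => /eqP; rewrite !scalemx_eq0 gt_eqF //= eqz_nat.
by rewrite (negbTE (lt0n_neq0 n_gt0)) => /eqP.
Qed.

Lemma exists_root_witness k : odd k -> (k < n)%N -> exists i, root_witness i k.
Proof.
move=> odd_k lt_kn.
have n_gt0 : (0 < n)%N by rewrite double_gt0.
pose kk : 'I_n.+1 := inord k; pose kk1 : 'I_n.+1 := inord k.+1.
have kkE : kk = k :> nat by rewrite inordK // ltnS ltnW.
have kk1E : kk1 = k.+1 :> nat by rewrite inordK.
have [Ck_gt0 Ck1_gt0] : 0 < 'C(n, k)%:Z /\ 0 < 'C(n, k.+1)%:Z by rewrite !ltz_nat !bin_gt0 ltnW.
have Ek : alt_binom n k = - 'C(n, k)%:Z.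
  by rewrite /alt_binom -signr_odd odd_k expr1 mulN1r natz.
have Ek1 : alt_binom n k.+1 = 'C(n, k.+1)%:Z.
  by rewrite /alt_binom -signr_odd /= odd_k expr0 mul1r natz.
(* w_j = (-1)^j C(n, j) (2j - 2k - 1) is positive at j = k and j = k + 1 as k is odd. *)
pose w := alt_binom_line n (- (2 * k%:Z + 1)) 2.
have w_gt0 j : j \in [set kk; kk1] -> 0 < w j 0.
  rewrite !inE => /orP [] /eqP ->; rewrite mxE ?kkE ?kk1E ?Ek ?Ek1.
  - by rewrite [_ * _](_ : _ = 'C(n, k)%:Z) //; ring.
  - by rewrite [_ * _](_ : _ = 'C(n, k.+1)%:Z) // intS; ring.
have S_neq0 : [set kk; kk1] != set0 by apply/set0Pn; exists kk; rewrite !inE eqxx.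
have [i [v [Asv v_ge0 [j jS vj_neq0]]]] :=
  ker_As_vector_on S_neq0 (nat_vander_alt_binom_line n _ _) w_gt0.
have [a [b v_line]] := nat_vander_ker_line n_gt0 (ker_As_sub Asv).
exists i, v, a, b; split => //.
have entry l : n%:Z * v l 0 = alt_binom n l * (a + b * l%:Z).
  by have := congr1 (fun M : 'cV_n.+1 => M l 0) v_line; rewrite !mxE.
have vk := entry kk; have vk1 := entry kk1.
rewrite kkE Ek in vk; rewrite kk1E Ek1 intS in vk1.
have := v_ge0 kk; have := v_ge0 kk1; rewrite !inE !eqxx ?orbT => /(_ isT) vk1_ge0 /(_ isT) vk_ge0.
apply: increasing_root_in_of_signs; [nia | nia |].
move: jS vj_neq0; rewrite !inE => /orP [] /eqP ->; nia.
Qed.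

Lemma cyclic_cover_size : (d <= s)%N.
Proof.
have witness (m : 'I_d) : exists i, root_witness i m.*2.+1.
  by apply: exists_root_witness; rewrite /= ?odd_double ?ltn_Sdouble.
have [f f_root] := fin_all_exists witness.
have far (m m' : 'I_d) : (m < m')%N -> f m != f m'.
  move=> lt_mm'; apply/eqP => fmm'.
  apply: (@root_witness_far (f m) m.*2.+1 m'.*2.+1); first by lia.
    exact: f_root.
  by rewrite fmm'; apply: f_root.
have f_inj : injective f.
  by move=> m m' fmm'; apply/val_inj/eqP; case: ltngtP => // /far; rewrite fmm' eqxx.
by have := leq_card f f_inj; rewrite !card_ord.
Qed.

End CyclicCover.

Lemma toric_ideal_sum_mem (K : fieldType) n s (ms : 'I_s -> nat)
    (As : forall i : 'I_s, 'M[int]_(ms i, n)) i (p : {mpoly K[n]}) :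
  toric_ideal (As i) p -> ideal_sum (fun j => @toric_ideal K _ _ (As j)) p.
Proof.
move=> Asp; exists (fun j => if j == i then p else 0); split.
  by move=> j; case: eqP => [->|_] //; apply: toric_ideal0.
by rewrite (bigD1 i) //= eqxx big1 ?addr0 // => j /negbTE ->.
Qed.

Theorem proposition4p9 (K : fieldType) (N : nat) (hN : (0 < N)%N) :
  exists (d : nat) (t : 'I_(d.*2.+1) -> int),
    [/\ (2 <= d)%N,
        (forall i j : 'I_(d.*2.+1), (i < j)%N -> t i < t j),
        @split_ge K _ _ (cyclic_config t) N &
        @split_rad_ge K _ _ (cyclic_config t) N].
Proof.
(* With t_j = j, [cyclic_config t] is convertible to [nat_vander]. *)
exists N.+2, (fun j => (j : nat)%:Z); split=> // [s lt_sN | s lt_sN].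
- move=> [ms [As [A_eq As_neq]]]; suff : (N.+2 <= s)%N by lia.
  apply: (cyclic_cover_size (ms := ms) (As := As)) => // [i p | p /A_eq].
    by move/toric_ideal_sum_mem/A_eq.
  by exists 0%N; rewrite expr1.
- move=> [ms [As [A_eq As_neq]]]; suff : (N.+2 <= s)%N by lia.
  apply: (cyclic_cover_size (ms := ms) (As := As)) => // [i p Asp | p /A_eq //].
  by apply/A_eq; exists 0%N; rewrite expr1; apply: toric_ideal_sum_mem Asp.
Qed.
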